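(* If a closed-loop DT model $\bar F:\mathbb{R}^n\times(0,\infty)\to\mathbb{R}^n$ is SLES-VSR, then it is SS-VSR.
   Context: Solutions: $x_{k+1}=\bar F(x_k,T_k)$. $\Phi(T)$: set of sequences $\{T_i\}_{i\ge0}$ with $T_i\in(0,T)$; $\sum_{i=0}^{-1}T_i=0$. $\mathcal{KL}$: $\beta:\mathbb{R}_{\ge0}^2\to\mathbb{R}_{\ge0}$, continuous strictly increasing with $\beta(0,t)=0$ in the first argument, strictly decreasing to $0$ in the second. SPS-VSR: there is $\beta\in\mathcal{KL}$ such that for every $M\ge0$, $R>0$ there is $T^\star(M,R)>0$ with $|x_k|\le\beta(|x_0|,\sum_{i=0}^{k-1}T_i)+R$ for all $k\in\mathbb{N}_0$, $\{T_i\}\in\Phi(T^\star)$, $|x_0|\le M$. LES-VSR: there exist $K\ge1$, $R,T^\star,\lambda>0$ with $|x_k|\le K|x_0|e^{-\lambda\sum_{i=0}^{k-1}T_i}$ for all $k$, $\{T_i\}\in\Phi(T^\star)$, $|x_0|\le R$. SLES-VSR: SPS-VSR and LES-VSR. SS-VSR: there is $\beta\in\mathcal{KL}$ such that for every $M\ge0$ there is $T^\star(M)>0$ with $|x_k|\le\beta(|x_0|,\sum_{i=0}^{k-1}T_i)$ for all $k\in\mathbb{N}_0$, $\{T_i\}\in\Phi(T^\star)$, $|x_0|\le M$. *)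

From HB Require Import structures.
From mathcomp Require Import all_boot all_order all_algebra.
From mathcomp Require Import all_classical all_reals all_analysis.
Set Implicit Arguments. Unset Strict Implicit. Unset Printing Implicit Defensive.
Import Order.TTheory GRing.Theory Num.Theory numFieldNormedType.Exports.
Local Open Scope ring_scope.
Local Open Scope classical_set_scope.

Definition enorm {R : realType} {n : nat} (x : 'rV[R]_n) : R :=
  Num.sqrt (\sum_(i < n) x 0 i ^+ 2).

Fixpoint sol {R : realType} {n : nat} (F : 'rV[R]_n -> R -> 'rV[R]_n)
  (x0 : 'rV[R]_n) (T : nat -> R) (k : nat) : 'rV[R]_n :=
  match k with
  | 0 => x0
  | k'.+1 => F (sol F x0 T k') (T k')
  end.

Definition tsum {R : realType} (T : nat -> R) (k : nat) : R := \sum_(i < k) T i.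

Definition Phi {R : realType} (Ts : R) (T : nat -> R) : Prop :=
  forall i, 0 < T i < Ts.

Definition classKL {R : realType} (beta : R -> R -> R) : Prop :=
  (forall s t : R, 0 <= s -> 0 <= t -> 0 <= beta s t) /\
  (forall t : R, 0 <= t -> beta 0 t = 0) /\
  (forall t : R, 0 <= t ->
     {within [set s : R | 0 <= s], continuous (fun s : R => beta s t)}) /\
  (forall t s1 s2 : R, 0 <= t -> 0 <= s1 -> s1 < s2 -> beta s1 t < beta s2 t) /\
  (forall s t1 t2 : R, 0 < s -> 0 <= t1 -> t1 < t2 -> beta s t2 < beta s t1) /\
  (forall s : R, 0 <= s -> (fun t : R => beta s t) @ +oo --> (0 : R)).

Definition SPS_VSR {R : realType} {n : nat} (F : 'rV[R]_n -> R -> 'rV[R]_n) : Prop :=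
  exists beta, classKL beta /\
  forall M Rr : R, 0 <= M -> 0 < Rr -> exists Ts : R, 0 < Ts /\
    forall (k : nat) (T : nat -> R) (x0 : 'rV[R]_n), Phi Ts T -> enorm x0 <= M ->
      enorm (sol F x0 T k) <= beta (enorm x0) (tsum T k) + Rr.

Definition LES_VSR {R : realType} {n : nat} (F : 'rV[R]_n -> R -> 'rV[R]_n) : Prop :=
  exists K Rr Ts lam : R, 1 <= K /\ 0 < Rr /\ 0 < Ts /\ 0 < lam /\
    forall (k : nat) (T : nat -> R) (x0 : 'rV[R]_n), Phi Ts T -> enorm x0 <= Rr ->
      enorm (sol F x0 T k) <= K * enorm x0 * expR (- (lam * tsum T k)).

Definition SLES_VSR {R : realType} {n : nat} (F : 'rV[R]_n -> R -> 'rV[R]_n) : Prop :=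
  SPS_VSR F /\ LES_VSR F.

Definition SS_VSR {R : realType} {n : nat} (F : 'rV[R]_n -> R -> 'rV[R]_n) : Prop :=
  exists beta, classKL beta /\
  forall M : R, 0 <= M -> exists Ts : R, 0 < Ts /\
    forall (k : nat) (T : nat -> R) (x0 : 'rV[R]_n), Phi Ts T -> enorm x0 <= M ->
      enorm (sol F x0 T k) <= beta (enorm x0) (tsum T k).

From HB Require Import structures.
From mathcomp Require Import all_boot all_order all_algebra.
From mathcomp Require Import all_classical all_reals all_analysis.
From mathcomp Require Import lra.
Set Implicit Arguments. Unset Strict Implicit. Unset Printing Implicit Defensive.
Import Order.TTheory GRing.Theory Num.Theory numFieldNormedType.Exports.
Local Open Scope ring_scope.
Local Open Scope classical_set_scope.

(* Let m be the first integer above |x0|.  Practical stability with offset r/2 keeps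
   the solution below beta(m,0) + r/2 and drives it into the ball of radius r, where
   local exponential stability takes over, once the elapsed time exceeds some tau_m
   with beta(m,tau_m) <= r/2; as the steps are shorter than 1 this happens before time
   tau_m + 1.  Hence |x_k| <= g(m) exp(-lam t_k) for an explicit g(m), and the bound
   phi(|x0|) exp(-lam t) is of class KL for any continuous strictly increasing phi with
   phi(0) = 0, phi(s) >= K s and phi(s) >= g(m) for s >= r; such a phi is built as a
   convex series of hinge functions. *)

Section Hinge.
Variable R : realType.

Definition hinge (j : nat) (s : R) := Num.max 0 (s - j%:R).

Lemma hinge_ge0 j s : 0 <= hinge j s.
Proof. by rewrite le_max lexx. Qed.

Lemma hinge_eq0 j s : s <= j%:R -> hinge j s = 0.
Proof. by move=> sj; apply/max_idPl; rewrite subr_le0. Qed.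

Lemma hinge_eq j s : j%:R <= s -> hinge j s = s - j%:R.
Proof. by move=> js; apply/max_idPr; rewrite subr_ge0. Qed.

Lemma hinge_homo j : {homo hinge j : s1 s2 / s1 <= s2}.
Proof. by move=> s1 s2 le12; rewrite /hinge le_max2 ?lexx ?lerB. Qed.

Lemma continuous_hinge j : continuous (hinge j).
Proof.
move=> x; apply: (@continuous_max _ R^o (cst 0) (fun s => s - j%:R)).
  exact: cvg_cst.
by apply: cvgB; [exact: cvg_id | exact: cvg_cst].
Qed.

Variable a : nat -> R.
Hypothesis a_ge0 : forall j, 0 <= a j.

Definition hinge_sum (N : nat) (s : R) := \sum_(j < N) a j * hinge j s.

Lemma hinge_sum_ge0 N s : 0 <= hinge_sum N s.
Proof. by apply: sumr_ge0 => j _; rewrite mulr_ge0 ?hinge_ge0. Qed.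

Lemma hinge_sum_homo N : {homo hinge_sum N : s1 s2 / s1 <= s2}.
Proof. by move=> s1 s2 le12; apply: ler_sum => j _; rewrite ler_wpM2l ?hinge_homo. Qed.

Lemma hinge_sum_term_le N j s : (j < N)%N -> a j * hinge j s <= hinge_sum N s.
Proof.
move=> jN; rewrite /hinge_sum (bigD1 (Ordinal jN)) //= lerDl.
by apply: sumr_ge0 => i _; rewrite mulr_ge0 ?hinge_ge0.
Qed.

Lemma hinge_sum_stable N N' s : s <= N%:R -> (N <= N')%N -> hinge_sum N' s = hinge_sum N s.
Proof.
move=> sN /subnKC <-; rewrite /hinge_sum big_split_ord /= addrC.
rewrite big1 ?add0r // => j _; rewrite hinge_eq0 ?mulr0 //.
by rewrite (le_trans sN) // ler_nat leq_addr.
Qed.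

Lemma continuous_hinge_sum N : continuous (hinge_sum N).
Proof.
elim: N => [|N IH] x.
  by rewrite /hinge_sum; under eq_fun do rewrite big_ord0; exact: cvg_cst.
rewrite /hinge_sum; under eq_fun do rewrite big_ord_recr /=.
apply: cvgD; [exact: IH | apply: cvgM; [exact: cvg_cst | exact: continuous_hinge]].
Qed.

Variable c : R.

Definition hinge_series (s : R) := c * s + hinge_sum (Num.truncn s).+1 s.

Lemma hinge_seriesE N s : s <= N%:R -> hinge_series s = c * s + hinge_sum N s.
Proof.
move=> sN; congr (_ + _); pose N' := maxn N (Num.truncn s).+1.
rewrite -(@hinge_sum_stable (Num.truncn s).+1 N' s) ?leq_maxr ?(ltW (truncnS_gt s)) //.
by rewrite (@hinge_sum_stable N N' s) ?leq_maxl.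
Qed.

Lemma hinge_series0 : hinge_series 0 = 0.
Proof. by rewrite (@hinge_seriesE 0) // mulr0 /hinge_sum big_ord0 addr0. Qed.

Lemma hinge_series_ge_term j s : 0 <= c * s -> a j * hinge j s <= hinge_series s.
Proof.
move=> cs0; rewrite (@hinge_seriesE (maxn j.+1 (Num.truncn s).+1)); last first.
  by rewrite (le_trans (ltW (truncnS_gt s))) // ler_nat leq_maxr.
by rewrite -[X in X <= _]add0r lerD // hinge_sum_term_le // leq_maxl.
Qed.

Lemma hinge_series_ge_lin s : c * s <= hinge_series s.
Proof. by rewrite lerDl hinge_sum_ge0. Qed.

Lemma continuous_hinge_series : continuous hinge_series.
Proof.
move=> x; pose N := (Num.truncn (x + 1)).+1.
have xN : x < N%:R by apply: lt_trans (truncnS_gt _); lra.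
have near_x : {near x, (fun s => c * s + hinge_sum N s) =1 hinge_series}.
  by apply: filterS (lt_le_nbhsl xN) => s /hinge_seriesE.
apply: cvg_trans (near_eq_cvg near_x) _; rewrite (hinge_seriesE (ltW xN)).
by apply: cvgD; [apply: cvgM; [exact: cvg_cst | exact: cvg_id] | exact: continuous_hinge_sum].
Qed.

Hypothesis c_gt0 : 0 < c.

Lemma hinge_series_lt : {homo hinge_series : s1 s2 / s1 < s2}.
Proof.
move=> s1 s2 lt12; pose N := maxn (Num.truncn s1).+1 (Num.truncn s2).+1.
rewrite (@hinge_seriesE N s1) ?(le_trans (ltW (truncnS_gt s1))) ?ler_nat ?leq_maxl //.
rewrite (@hinge_seriesE N s2) ?(le_trans (ltW (truncnS_gt s2))) ?ler_nat ?leq_maxr //.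
by rewrite ltr_leD ?ltr_pM2l ?hinge_sum_homo ?ltW.
Qed.

End Hinge.

Definition classK {R : realType} (phi : R -> R) :=
  [/\ phi 0 = 0, continuous phi & {homo phi : s1 s2 / s1 < s2}].

Lemma classK_hinge_series (R : realType) (a : nat -> R) (c : R) :
  (forall j, 0 <= a j) -> 0 < c -> classK (hinge_series a c).
Proof.
by move=> a_ge0 c_gt0; split; [exact: hinge_series0 | exact: continuous_hinge_series |
  exact: hinge_series_lt].
Qed.

Lemma classK_ge0 (R : realType) (phi : R -> R) s : classK phi -> 0 <= s -> 0 <= phi s.
Proof.
case=> phi0 _ phi_lt; rewrite le_eqVlt => /predU1P[<-|s_gt0]; first by rewrite phi0.
by rewrite -phi0 ltW ?phi_lt.
Qed.

Lemma exists_classK_majorant (R : realType) (g : nat -> R) (c d : R) : 0 < c -> 0 < d ->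
  exists phi : R -> R, [/\ classK phi, forall s, c * s <= phi s &
    forall s, d <= s -> g (Num.truncn s).+1 <= phi s].
Proof.
move=> c_gt0 d_gt0; pose e := Num.min 1 d.
have e_gt0 : 0 < e by rewrite lt_min ltr01 d_gt0.
(* Beyond its corner by at least [e], the hinge at [(truncn s).-1] alone dominates
   [g (truncn s).+1]. *)
pose a j := (\sum_(i < j.+3) `|g i|) / e.
have a_ge0 j : 0 <= a j by rewrite divr_ge0 ?sumr_ge0 // ltW.
exists (hinge_series a c); split=> [|s|s ds]; first exact: classK_hinge_series.
  exact: hinge_series_ge_lin.
set N := Num.truncn s.
have e_le_hinge : e <= hinge N.-1 s.
  have Ns : N%:R <= s by rewrite truncn_le (le_trans (ltW d_gt0)).
  rewrite hinge_eq ?(le_trans _ Ns) ?ler_nat ?leq_pred //.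
  have [->|N_gt0] := posnP N; first by rewrite subr0 (le_trans _ ds) // ge_min lexx orbT.
  have NE : N%:R = N.-1%:R + 1 :> R by rewrite natr1 prednK.
  by rewrite (@le_trans _ _ 1) ?ge_min ?lexx //; lra.
have g_le_sum : g N.+1 <= \sum_(i < N.-1.+3) `|g i|.
  have NS : (N.+1 < N.-1.+3)%N by case: (N).
  rewrite (bigD1 (Ordinal NS)) //= (le_trans (ler_norm _)) // lerDl.
  exact: sumr_ge0.
apply: (le_trans g_le_sum); apply: le_trans (hinge_series_ge_term a_ge0 N.-1 _); last first.
  by rewrite mulr_ge0 ?ltW // (lt_le_trans d_gt0).
by rewrite -(divfK (lt0r_neq0 e_gt0) (\sum_(i < _) _)); apply: ler_wpM2l => //; exact: a_ge0.
Qed.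

Lemma cvgy_expR_decay (R : realType) (lam : R) : 0 < lam ->
  (fun t : R => expR (- (lam * t))) @ +oo --> (0 : R).
Proof.
move=> lam_gt0.
apply: (@cvg_comp _ _ _ (fun t => lam * t) (fun u => expR (- u)) _ (pinfty_nbhs R)).
  exact: gt0_cvgMry.
exact: cvgr_expR.
Qed.

Lemma classKL_expR_decay (R : realType) (phi : R -> R) (lam : R) :
  classK phi -> 0 < lam -> classKL (fun s t => phi s * expR (- (lam * t))).
Proof.
move=> phiK lam_gt0; have [phi0 phi_cont phi_lt] := phiK.
split; [|split; [|split; [|split; [|split]]]].
- by move=> s t s_ge0 _; rewrite mulr_ge0 ?expR_ge0 ?classK_ge0.
- by move=> t _; rewrite phi0 mul0r.
- move=> t _; apply: continuous_subspaceT => x.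
  by apply: cvgM; [exact: phi_cont | exact: cvg_cst].
- by move=> t s1 s2 _ _ lt12; rewrite ltr_pM2r ?expR_gt0 ?phi_lt.
- move=> s t1 t2 s_gt0 _ lt12; rewrite ltr_pM2l; last by rewrite -phi0 phi_lt.
  by rewrite ltr_expR ltrN2 ltr_pM2l.
- move=> s _; rewrite -(mulr0 (phi s)).
  by apply: cvgM; [exact: cvg_cst | exact: cvgy_expR_decay].
Qed.

Lemma enorm_ge0 (R : realType) n (x : 'rV[R]_n) : 0 <= enorm x.
Proof. exact: sqrtr_ge0. Qed.

Lemma solD (R : realType) n (F : 'rV[R]_n -> R -> 'rV[R]_n) x0 T j i :
  sol F x0 T (j + i) = sol F (sol F x0 T j) (fun l => T (j + l)) i.
Proof. by elim: i => [|i IH]; rewrite ?addn0 // addnS /= IH. Qed.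

Lemma tsumD (R : realType) (T : nat -> R) j i :
  tsum T (j + i) = tsum T j + tsum (fun l => T (j + l)) i.
Proof. by rewrite /tsum big_split_ord. Qed.

Lemma tsum_ge0 (R : realType) (T : nat -> R) k : (forall i, 0 <= T i) -> 0 <= tsum T k.
Proof. by move=> T_ge0; apply: sumr_ge0. Qed.

Lemma Phi_le (R : realType) (Ts Ts' : R) T : Ts <= Ts' -> Phi Ts T -> Phi Ts' T.
Proof. by move=> le_Ts PhiT i; have /andP[-> /lt_le_trans->] := PhiT i. Qed.

Lemma tsum_first_crossing (R : realType) (T : nat -> R) (tau : R) k :
  (forall i, T i <= 1) -> 0 <= tau -> tau <= tsum T k ->
  exists2 j, (j <= k)%N & tau <= tsum T j <= tau + 1.
Proof.
move=> T_le1 tau_ge0 crossed.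
have [j crossed_j min_j] := ex_minnP (ex_intro (fun j => tau <= tsum T j) k crossed).
exists j; first exact: min_j.
rewrite crossed_j /=; case: j crossed_j min_j => [|j] _ min_j.
  by rewrite /tsum big_ord0; lra.
have : tsum T j < tau by rewrite ltNge; apply/negP => /min_j; rewrite ltnn.
by rewrite /tsum big_ord_recr /= -/(tsum T j); have := T_le1 j; lra.
Qed.

Lemma classKL_le (R : realType) (beta : R -> R -> R) s s' t t' : classKL beta ->
  0 <= s -> s <= s' -> 0 <= t' -> t' <= t -> beta s t <= beta s' t'.
Proof.
move=> [_ [beta0 [_ [beta_incr [beta_decr _]]]]] s_ge0 le_s t'_ge0 le_t.
apply: (@le_trans _ _ (beta s t')).
  have [->|s_gt0] := eqVneq s 0; first by rewrite !beta0 // (le_trans t'_ge0).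
  move: le_t; rewrite le_eqVlt => /predU1P[-> //|lt_t].
  by rewrite ltW ?beta_decr // lt_neqAle eq_sym s_gt0.
by move: le_s; rewrite le_eqVlt => /predU1P[-> //|lt_s]; rewrite ltW ?beta_incr.
Qed.

Lemma classKL_eventually_le (R : realType) (beta : R -> R -> R) s e :
  classKL beta -> 0 <= s -> 0 < e ->
  exists tau, 0 <= tau /\ forall t, tau <= t -> beta s t <= e.
Proof.
move=> [_ [_ [_ [_ [_ beta_lim]]]]] s_ge0 e_gt0.
have [M [_ beta_near0]] := (cvgrPdist_le _ _).1 (beta_lim s s_ge0) e e_gt0.
exists (Num.max 0 (M + 1)); split; first by rewrite le_max lexx.
move=> t le_t; have /beta_near0 : M < t by apply: lt_le_trans le_t; rewrite lt_max ltrDl ltr01 orbT.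
by rewrite sub0r normrN; apply: le_trans (ler_norm _).
Qed.

Section SLES_bound.
Variables (R : realType) (n : nat) (F : 'rV[R]_n -> R -> 'rV[R]_n).
Variables (K r TL lam : R).
Hypotheses (K_ge0 : 0 <= K) (r_gt0 : 0 < r) (lam_gt0 : 0 < lam).
Hypothesis LES : forall k T x0, Phi TL T -> enorm x0 <= r ->
  enorm (sol F x0 T k) <= K * enorm x0 * expR (- (lam * tsum T k)).

Lemma LES_restart k j T x0 : (j <= k)%N -> Phi TL T -> enorm (sol F x0 T j) <= r ->
  enorm (sol F x0 T k) <= K * r * expR (lam * tsum T j) * expR (- (lam * tsum T k)).
Proof.
move=> /subnKC <- PhiT xj_le; rewrite solD tsumD -mulrA -expRD.
have -> : lam * tsum T j + - (lam * (tsum T j + tsum (fun l => T (j + l)) (k - j)))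
    = - (lam * tsum (fun l => T (j + l)) (k - j)) by lra.
apply: le_trans (LES _ (fun l => PhiT _) xj_le) _.
by rewrite -!mulrA; apply: ler_wpM2l => //; apply: ler_wpM2r => //; exact: expR_ge0.
Qed.

Variables (beta : R -> R -> R) (M TS : R).
Hypothesis beta_KL : classKL beta.
Hypothesis SPS : forall k T x0, Phi TS T -> enorm x0 <= M ->
  enorm (sol F x0 T k) <= beta (enorm x0) (tsum T k) + r / 2.

Lemma SLES_transient_bound (m : nat) (tau : R) k T x0 :
  0 <= tau -> (forall t, tau <= t -> beta m%:R t <= r / 2) ->
  Phi TS T -> Phi TL T -> (forall i, T i <= 1) -> enorm x0 <= M -> enorm x0 <= m%:R ->
  enorm (sol F x0 T k) <=
    (beta m%:R 0 + r + K * r) * expR (lam * (tau + 1)) * expR (- (lam * tsum T k)).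
Proof.
move=> tau_ge0 beta_tau PhiS PhiL T_le1 x0_le_M x0_le_m.
have T_ge0 i : 0 <= T i by have /andP[/ltW] := PhiS i.
have beta_m0 : 0 <= beta m%:R 0 by case: beta_KL => ->.
have bound_SPS j : enorm (sol F x0 T j) <= beta m%:R (tsum T j) + r / 2.
  apply: le_trans (SPS _ PhiS x0_le_M) _; rewrite lerD2r.
  exact: classKL_le (enorm_ge0 _) x0_le_m (tsum_ge0 _ T_ge0) (lexx _).
have Kr_ge0 : 0 <= K * r := mulr_ge0 K_ge0 (ltW r_gt0).
have [before|after] := lerP (tsum T k) (tau + 1).
  have decay_ge1 : 1 <= expR (lam * (tau + 1)) * expR (- (lam * tsum T k)).
    rewrite -expRD; apply: le_trans (expR_ge1Dx _).
    by have := ler_wpM2l (ltW lam_gt0) before; lra.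
  have B_ge0 : 0 <= beta m%:R 0 + r + K * r by rewrite !addr_ge0 // ltW.
  rewrite -mulrA; apply: le_trans (ler_peMr B_ge0 decay_ge1).
  apply: le_trans (bound_SPS k) _.
  rewrite -addrA lerD //; first exact: classKL_le (ler0n _ m) (lexx _) (lexx 0) (tsum_ge0 k T_ge0).
  move: r_gt0 Kr_ge0; lra.
have tau_le_k : tau <= tsum T k by move: after; lra.
have [j le_jk /andP[tau_le_j j_le_tau1]] := tsum_first_crossing T_le1 tau_ge0 tau_le_k.
have xj_le_r : enorm (sol F x0 T j) <= r.
  by apply: le_trans (bound_SPS j) _; have := beta_tau _ tau_le_j; lra.
apply: le_trans (LES_restart le_jk PhiL xj_le_r) _.
apply: ler_wpM2r; first exact: expR_ge0.
apply: ler_pM => //.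
  by move: beta_m0 r_gt0; lra.
by rewrite ler_expR ler_wpM2l // ltW.
Qed.

End SLES_bound.

Theorem lemma3 (R : realType) (n : nat) (F : 'rV[R]_n -> R -> 'rV[R]_n) :
  SLES_VSR F -> SS_VSR F.
Proof.
move=> [[beta [beta_KL SPS]] [K [r [TL [lam [K_ge1 [r_gt0 [TL_gt0 [lam_gt0 LES]]]]]]]]].
have K_gt0 : 0 < K := lt_le_trans ltr01 K_ge1.
have r2_gt0 : 0 < r / 2 by rewrite divr_gt0.
have [tau tau_spec] := boolp.choice (fun m : nat =>
  classKL_eventually_le beta_KL (ler0n R m) r2_gt0).
pose g m := (beta m%:R 0 + r + K * r) * expR (lam * (tau m + 1)).
have [phi [phiK phi_ge_lin phi_ge_g]] := exists_classK_majorant g K_gt0 r_gt0.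
exists (fun s t => phi s * expR (- (lam * t))); split; first exact: classKL_expR_decay.
move=> M M_ge0; have [TS [TS_gt0 SPS_M]] := SPS M (r / 2) M_ge0 r2_gt0.
exists (Num.min TS (Num.min TL 1)); split; first by rewrite !lt_min TS_gt0 TL_gt0 ltr01.
move=> k T x0 PhiT x0_le_M.
have PhiS : Phi TS T by apply: Phi_le PhiT; rewrite ge_min lexx.
have PhiL : Phi TL T by apply: Phi_le PhiT; rewrite !ge_min lexx orbT.
have Phi1 : Phi 1 T by apply: Phi_le PhiT; rewrite !ge_min lexx !orbT.
have T_le1 i : T i <= 1 by have /andP[_ /ltW] := Phi1 i.
have [x0_le_r|x0_gt_r] := lerP (enorm x0) r.
  by apply: le_trans (LES k T x0 PhiL x0_le_r) _; apply: ler_wpM2r.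
have [tau_ge0 beta_le] := tau_spec (Num.truncn (enorm x0)).+1.
apply: le_trans (SLES_transient_bound (ltW K_gt0) r_gt0 lam_gt0 LES beta_KL SPS_M k
  tau_ge0 beta_le PhiS PhiL T_le1 x0_le_M (ltW (truncnS_gt _))) _.
by apply: ler_wpM2r; rewrite ?expR_ge0 ?phi_ge_g ?ltW.
Qed.
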